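(* Let $\mathcal{G}$ be a lattice of languages over a finite alphabet $A$ and $\tau:2^{A^*}\to Q$ a nice rating map. Let $S\subseteq Q$ be the set of all $s\in Q$ such that $\{\varepsilon\}$ is not $\mathcal{G}$-separable from $\tau_*^{-1}(s)$. Then $\iota_{\mathcal{G}}[\tau]=\sum_{s\in S}s$.
   Context: Fix a finite alphabet $A$. A lattice is a class of languages containing $\emptyset$ and $A^*$ and closed under union and intersection. $L_1$ is $\mathcal{G}$-separable from $L_2$ if some $K\in\mathcal{G}$ satisfies $L_1\subseteq K$ and $K\cap L_2=\emptyset$. A rating algebra is a finite commutative idempotent monoid $(Q,+)$ with neutral element $0_Q$, ordered by $q\le r$ iff $q+r=r$. A rating map is $\tau:2^{A^*}\to Q$ with $\tau(\emptyset)=0_Q$ and $\tau(K_1\cup K_2)=\tau(K_1)+\tau(K_2)$; it is nice if every $K\subseteq A^*$ has a finite subset $F$ with $\tau(K)=\tau(F)$. $\tau_*:A^*\to Q$ is $w\mapsto\tau(\{w\})$. A $\mathcal{G}$-identity is a language $L\in\mathcal{G}$ with $\varepsilon\in L$; there exists a $\mathcal{G}$-identity $L$ with $\tau(L)\le\tau(L')$ for every $\mathcal{G}$-identity $L'$, and $\iota_{\mathcal{G}}[\tau]$ denotes $\tau(L)$ for any such $L$. *)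

From HB Require Import structures.
From mathcomp Require Import all_boot all_order all_algebra.
Set Implicit Arguments. Unset Strict Implicit. Unset Printing Implicit Defensive.
Import GRing.Theory.
Local Open Scope ring_scope.

Definition lang (A : finType) := seq A -> Prop.

Definition lang0 {A : finType} : lang A := fun _ => False.
Definition langT {A : finType} : lang A := fun _ => True.
Definition langU {A : finType} (K1 K2 : lang A) : lang A := fun w => K1 w \/ K2 w.
Definition langI {A : finType} (K1 K2 : lang A) : lang A := fun w => K1 w /\ K2 w.
Definition lang_of_seq {A : finType} (F : seq (seq A)) : lang A := fun w => w \in F.

Definition is_lattice {A : finType} (G : lang A -> Prop) : Prop :=
  [/\ G lang0, G langT,
      (forall K1 K2, G K1 -> G K2 -> G (langU K1 K2)) &
      (forall K1 K2, G K1 -> G K2 -> G (langI K1 K2))].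

(* A rating algebra: a finite commutative idempotent monoid (Q,+,0). *)
Definition idempotent_add (Q : finNmodType) : Prop := forall q : Q, q + q = q.

Definition rle {Q : finNmodType} (q r : Q) : Prop := q + r = r.

Definition is_rating_map {A : finType} {Q : finNmodType} (tau : lang A -> Q) : Prop :=
  tau lang0 = 0 /\ forall K1 K2, tau (langU K1 K2) = tau K1 + tau K2.

Definition is_nice {A : finType} {Q : finNmodType} (tau : lang A -> Q) : Prop :=
  forall K : lang A, exists F : seq (seq A),
    (forall w, w \in F -> K w) /\ tau K = tau (lang_of_seq F).

Definition tau_star {A : finType} {Q : finNmodType} (tau : lang A -> Q) (w : seq A) : Q :=
  tau (fun v => v = w).
Definition tau_star_inv {A : finType} {Q : finNmodType} (tau : lang A -> Q) (s : Q) : lang A :=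
  fun w => tau_star tau w = s.

Definition separable {A : finType} (G : lang A -> Prop) (L1 L2 : lang A) : Prop :=
  exists K, G K /\ (forall w, L1 w -> K w) /\ (forall w, K w -> ~ L2 w).

Definition eps_lang {A : finType} : lang A := fun w => w = [::].

Definition G_identity {A : finType} (G : lang A -> Prop) (L : lang A) : Prop :=
  G L /\ L [::].

(* [is_iota G tau q]: q = iota_G[tau], i.e. q = tau(L) for some G-identity L
   with tau(L) <= tau(L') for every G-identity L'.  (By antisymmetry of the
   order, such a q is unique.) *)
Definition is_iota {A : finType} {Q : finNmodType} (G : lang A -> Prop)
    (tau : lang A -> Q) (q : Q) : Prop :=
  exists L, G_identity G L /\ (forall L', G_identity G L' -> rle (tau L) (tau L'))
            /\ q = tau L.

(* Write sigma for the sum of S.  Every G-identity L' meets each class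
   tau_*^{-1}(s) with s in S (otherwise L' would separate), so tau(L') is
   above every s in S, hence above sigma.  Conversely, intersecting finitely
   many separators, one for each s outside S, yields a G-identity L all of
   whose words w have tau_*(w) in S; as tau is nice, tau(L) is the rating of a
   finite subset of L, i.e. a sum of such tau_*(w), hence below sigma.  So
   tau(L) = sigma is the least rating of a G-identity. *)
From mathcomp Require Import all_boot all_order all_algebra.
From Stdlib Require Import Classical FunctionalExtensionality PropExtensionality.
Set Implicit Arguments.
Unset Strict Implicit.
Unset Printing Implicit Defensive.
Local Open Scope ring_scope.
Import GRing.Theory.

Section RatingAlgebra.

Variable Q : finNmodType.

Lemma rle_anti (q r : Q) : rle q r -> rle r q -> q = r.
Proof. by rewrite /rle addrC => ->. Qed.

Lemma rle_add (a b c : Q) : rle a c -> rle b c -> rle (a + b) c.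
Proof. by rewrite /rle -addrA => leac ->. Qed.

Lemma rle_sum (I : Type) (r : seq I) (P : pred I) (F : I -> Q) (c : Q) :
  (forall i, P i -> rle (F i) c) -> rle (\sum_(i <- r | P i) F i) c.
Proof.
move=> leFc; apply: (big_ind (rle^~ c)) => //; first exact: add0r.
by move=> x y; exact: rle_add.
Qed.

Lemma rle_sum_mem (S : {set Q}) (s : Q) :
  idempotent_add Q -> s \in S -> rle s (\sum_(x in S) x).
Proof. by move=> idem sS; rewrite /rle (bigD1 s) //= addrA idem. Qed.

End RatingAlgebra.

Section Languages.

Variable A : finType.
Implicit Types (G : lang A -> Prop) (K : lang A).

Lemma lang_ext (K1 K2 : lang A) : (forall w, K1 w <-> K2 w) -> K1 = K2.
Proof.
by move=> eqK; apply: functional_extensionality => w;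
  apply: propositional_extensionality.
Qed.

Lemma lang_of_seq_nil : lang_of_seq [::] = @lang0 A.
Proof. exact: lang_ext. Qed.

Lemma lang_of_seq_cons (x : seq A) (F : seq (seq A)) :
  lang_of_seq (x :: F) = langU (fun v => v = x) (lang_of_seq F).
Proof.
apply: lang_ext => w; rewrite /lang_of_seq /langU in_cons.
split=> [/orP[/eqP|]|[|]]; [by left | by right | |]; move=> ->.
  by rewrite eqxx.
by rewrite orbT.
Qed.

Lemma separable_big_union G (I : eqType) (r : seq I) (L1 : lang A) (L2 : I -> lang A) :
  is_lattice G -> (forall i, i \in r -> separable G L1 (L2 i)) ->
  separable G L1 (fun w => exists2 i, i \in r & L2 i w).
Proof.
case=> _ GT _ GI; elim: r => [|i r IHr] sepr.
  by exists langT; split=> //; split=> // w _ [].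
have [K [GK [subK disK]]] := IHr (fun j jr => sepr j (mem_behead (s := i :: r) jr)).
have [Ki [GKi [subKi disKi]]] := sepr i (mem_head i r).
exists (langI K Ki); split; first exact: GI.
split=> [w L1w|w [Kw Kiw] [j]]; first by split; [apply: subK | apply: subKi].
rewrite in_cons => /orP[/eqP-> /(disKi w Kiw) //|jr L2jw].
by apply: (disK w Kw); exists j.
Qed.

Lemma not_separable_meet G (L1 L2 : lang A) K :
  ~ separable G L1 L2 -> G K -> (forall w, L1 w -> K w) ->
  exists w, K w /\ L2 w.
Proof.
move=> nsep GK subK; apply: NNPP => noW; apply: nsep.
by exists K; split; [|split] => // w Kw L2w; apply: noW; exists w.
Qed.

End Languages.

Section RatingMap.

Variables (A : finType) (Q : finNmodType) (tau : lang A -> Q).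
Hypothesis rating : is_rating_map tau.

Lemma rating_mono (K K' : lang A) :
  (forall w, K w -> K' w) -> rle (tau K) (tau K').
Proof.
case: rating => _ tauU subK; rewrite /rle -tauU; congr tau.
by apply: lang_ext => w; split=> [[/subK|]|]; [|done|right].
Qed.

Lemma rating_lang_of_seq (F : seq (seq A)) :
  tau (lang_of_seq F) = \sum_(w <- F) tau_star tau w.
Proof.
case: rating => tau0 tauU; elim: F => [|x F IHF].
  by rewrite lang_of_seq_nil tau0 big_nil.
by rewrite lang_of_seq_cons tauU IHF big_cons.
Qed.

Lemma nice_rle (K : lang A) (q : Q) :
  is_nice tau -> (forall w, K w -> rle (tau_star tau w) q) -> rle (tau K) q.
Proof.
move=> nice leKq; have [F [subF ->]] := nice K.
rewrite rating_lang_of_seq big_seq; apply: rle_sum => w /subF; exact: leKq.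
Qed.

End RatingMap.

Theorem lemma10p3 (A : finType) (Q : finNmodType) (G : lang A -> Prop)
    (tau : lang A -> Q) (S : {set Q}) :
  is_lattice G -> idempotent_add Q -> is_rating_map tau -> is_nice tau ->
  (forall s : Q, s \in S <-> ~ separable G eps_lang (tau_star_inv tau s)) ->
  is_iota G tau (\sum_(s in S) s).
Proof.
move=> lattice idem rating nice defS.
set sigma := \sum_(s in S) s.
have sigma_le (L' : lang A) : G_identity G L' -> rle sigma (tau L').
  case=> GL' L'eps; apply: rle_sum => s /defS nsep.
  have epsL' w : eps_lang w -> L' w by move->.
  have [w [L'w <-]] := not_separable_meet nsep GL' epsL'.
  by apply: rating_mono => // v ->.
have [L [GL [Leps disL]]] :
    separable G eps_lang (fun w => exists2 s, s \in enum (~: S) & tau_star_inv tau s w).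
  apply: separable_big_union => // s; rewrite mem_enum inE => /negP sNS.
  by apply: NNPP => nsep; apply/sNS/defS.
have tauL_le : rle (tau L) sigma.
  apply: nice_rle => // w Lw; apply: rle_sum_mem => //.
  apply: NNPP => wNS; apply: (disL w Lw); exists (tau_star tau w) => //.
  by rewrite mem_enum inE; apply/negP.
have idL : G_identity G L := conj GL (Leps [::] erefl).
have tauL : tau L = sigma := rle_anti tauL_le (sigma_le L idL).
by exists L; split=> //; rewrite tauL; split=> // L' /sigma_le.
Qed.
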